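(* Let $k\ge2$, $p\in\mathbb{S}^n$, $R\in(0,\pi/2)$, $B_R=\{q:\mathbf{d}_p(q)\le R\}$, $y\in\partial B_R$, and let $\gamma:[R,\pi]\to\mathbb{S}^n$ be the unit-speed minimizing geodesic from $y$ to $-p$, parametrized so that $\mathbf{d}_p(\gamma(s))=s$. Suppose $u$ is a bounded integrable function on $[R,\pi]$. Then the vector field $x\mapsto\int_R^\pi u(s)\Psi_{\gamma(s)}(x)\,ds$ on $B_R\setminus\{y\}$ satisfies \[\int_R^\pi u(s)\Psi_{\gamma(s)}\,ds=o(\mathbf{d}_y^{1-k})\quad\text{as }\mathbf{d}_y\searrow0.\]
   Context: $\mathbb{S}^n$ is the unit round sphere with Levi-Civita connection $\nabla$; $\mathbf{d}_q$ is geodesic distance from $q$. $I_k(r)=\int_0^r\sin^{k-1}s\,ds$, $\varphi(t)=I_k(t)\sin^{1-k}t$ for $t\in(0,\pi)$, $\varphi(0)=0$, $\Phi_q=(\varphi\circ\mathbf{d}_q)\nabla\mathbf{d}_q$ on $\mathbb{S}^n\setminus\{-q\}$, and $\Psi_q:=\Phi_{-q}$ on $\mathbb{S}^n\setminus\{q\}$. *)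

(* S^n is modelled as the unit sphere of R^{n+1}
   (row vectors 'rV[R]_(n.+1)), tangent vectors as ambient vectors. *)
From HB Require Import structures.
From mathcomp Require Import all_boot all_order all_algebra.
From mathcomp Require Import all_classical all_reals all_analysis.
Set Implicit Arguments. Unset Strict Implicit. Unset Printing Implicit Defensive.
Import Order.TTheory GRing.Theory Num.Theory.
Local Open Scope classical_set_scope.
Local Open Scope ring_scope.

Section Sphere.
Variables (R : realType) (n : nat).
Notation V := 'rV[R]_(n.+1).

Definition dotv (u v : V) : R := \sum_(i < n.+1) u 0 i * v 0 i.
Definition normv (v : V) : R := Num.sqrt (dotv v v).

Definition on_sphere (x : V) : Prop := dotv x x = 1.

Definition gdist (q x : V) : R := acos (dotv q x).

Definition Ik (k : nat) (r : R) : R :=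
  Rintegral lebesgue_measure `[0, r] (fun s => sin s ^+ (k.-1)).

Definition phik (k : nat) (t : R) : R :=
  if t == 0 then 0 else Ik k t / (sin t ^+ (k.-1)).

(* Riemannian gradient of d_q at x (x <> q, -q): the tangential projection of
   the Euclidean gradient of x |-> acos <q,x>, i.e.
   (cos d_q(x) x - q) / sin d_q(x). *)
Definition grad_dist (q x : V) : V :=
  (sin (gdist q x))^-1 *: (cos (gdist q x) *: x - q).

(* Phi_q = (phi o d_q) grad d_q on S^n \ {-q}; at x = q it is 0 since phi(0)=0 *)
Definition Phi (k : nat) (q x : V) : V :=
  if x == q then 0 else phik k (gdist q x) *: grad_dist q x.

Definition Psi (k : nat) (q x : V) : V := Phi k (- q) x.

Definition PsiInt (k : nat) (a b : R) (u : R -> R) (gamma : R -> V) (x : V) : V :=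
  \row_(i < n.+1)
     Rintegral lebesgue_measure `[a, b] (fun s => u s * (Psi k (gamma s) x) 0 i).

End Sphere.

From HB Require Import structures.
From mathcomp Require Import all_boot all_order all_algebra.
From mathcomp Require Import all_classical all_reals all_analysis.
From mathcomp Require Import ring lra measurable_realfun.
Import Order.TTheory GRing.Theory Num.Theory numFieldNormedType.Exports.
Local Open Scope classical_set_scope.
Local Open Scope ring_scope.

(* Put d = d_y(x) and D(s) = d(gamma(s), x).  Since d_{-q} = pi - d_q and
   I_k(t) <= t, every coordinate of Psi_q(x) is at most pi / sin^(k-1) D.  The
   triangle inequality through p and through y gives s - rho <= D(s),
   d <= (s - rho) + D(s) and D(s) <= (s - rho) + d, so D(s) lies in
   [max(s - rho, d/2), pi - rho/2], where sin D >= cos 1 * m for every lower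
   bound m <= 1 of D.  Cutting [rho, pi] at rho + eta, the piece near y
   contributes O(eta d^(1-k)) and the rest O_eta(1); taking eta small and then
   d small gives o(d^(1-k)). *)

Section integral_bounds.
Context {d : measure_display} {T : measurableType d} {R : realType}.
Variable mu : {measure set T -> \bar R}.

(* No measurability is assumed: s |-> u s * Psi_(gamma s)(x) is not known to be
   measurable, so integrals are compared through their defining suprema over
   simple functions. *)
Lemma ge0_le_integral_nonmeas (D : set T) (f g : T -> \bar R) :
  (forall x, D x -> (0 <= f x)%E) -> (forall x, D x -> (f x <= g x)%E) ->
  (\int[mu]_(x in D) f x <= \int[mu]_(x in D) g x)%E.
Proof.
move=> f0 fg.
have g0 x : D x -> (0 <= g x)%E by move=> Dx; exact: le_trans (f0 x Dx) (fg x Dx).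
rewrite (ge0_integralE mu f0) (ge0_integralE mu g0).
apply: ereal_sup_le => _ [h hf <-]; exists h => //= x.
apply: le_trans (hf x) _; rewrite /patch; case: ifP => // /[1!inE] Dx; exact: fg.
Qed.

Lemma normr_Rintegral_le (D : set T) (f g : T -> R) (G : R) :
  (forall x, D x -> `|f x| <= g x) ->
  (\int[mu]_(x in D) (g x)%:E <= G%:E)%E ->
  `|Rintegral mu D f| <= G.
Proof.
move=> fg gG.
have part_le (h : T -> R) : (forall x, D x -> h x <= g x) ->
    (\int[mu]_(x in D) (Num.max (h x) 0)%:E <= G%:E)%E.
  move=> hg; apply: le_trans gG; apply: ge0_le_integral_nonmeas => x Dx.
    by rewrite lee_fin le_max lexx orbT.
  by rewrite lee_fin ge_max hg //= (le_trans _ (fg x Dx)).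
have fp : (\int[mu]_(x in D) ((EFin \o f)^\+ x) <= G%:E)%E.
  under eq_integral do rewrite funeposE /= -EFin_max.
  by apply: part_le => x Dx; exact: le_trans (ler_norm _) (fg x Dx).
have fn : (\int[mu]_(x in D) ((EFin \o f)^\- x) <= G%:E)%E.
  under eq_integral do rewrite funenegE /= -EFin_max.
  by apply: part_le => x Dx; rewrite (le_trans (ler_norm _)) // normrN fg.
have fp0 : (0 <= \int[mu]_(x in D) ((EFin \o f)^\+ x))%E by exact: integral_ge0.
have fn0 : (0 <= \int[mu]_(x in D) ((EFin \o f)^\- x))%E by exact: integral_ge0.
rewrite /Rintegral integralE; move: fp0 fp fn0 fn.
case: (\int[mu]_(x in D) _)%E => [a| |] //; case: (\int[mu]_(x in D) _)%E => [b| |] //.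
by rewrite !lee_fin /= => a0 aG b0 bG; rewrite ler_norml; apply/andP; split; lra.
Qed.

End integral_bounds.

Lemma lebesgue_measure_itvcc (R : realType) (a b : R) : a <= b ->
  lebesgue_measure `[a, b] = (b - a)%:E.
Proof.
move=> ab; rewrite lebesgue_measure_itv /= lte_fin.
case: ltP => [_|ba]; first by rewrite EFinB.
have -> : b = a by apply/eqP; rewrite eq_le ab ba.
by rewrite subrr.
Qed.

Lemma integral_itv_step_le (R : realType) (a b e A B : R) :
  a <= b -> 0 <= e -> 0 <= A -> 0 <= B ->
  (\int[lebesgue_measure]_(s in `[a, b]) (A * \1_(`[a, a + e]) s + B)%:E
     <= (A * e + B * (b - a))%:E)%E.
Proof.
move=> ab e0 A0 B0.
under eq_integral do rewrite EFinD EFinM.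
rewrite ge0_integralD//; last 2 first.
- by move=> s _; rewrite mule_ge0// lee_fin.
- by apply/measurable_EFinP; apply: measurable_funM => //; exact: measurable_indic.
rewrite ge0_integralZl//; last exact/measurable_EFinP/measurable_indic.
rewrite integral_indic// integral_cst// EFinD EFinM (EFinM B).
apply: leeD; apply: lee_wpmul2l; rewrite ?lee_fin//.
  apply: le_trans (measureIl _ _ _) _ => //.
  by rewrite [X in (X <= _)%E]lebesgue_measure_itvcc ?lerDl// addrAC subrr add0r.
by rewrite [X in (X <= _)%E]lebesgue_measure_itvcc.
Qed.

Section trigonometry.
Context {R : realType}.

Lemma ler_sin : {in `[- (pi / 2), pi / 2] &, {mono (@sin R) : x y / x <= y}}.
Proof. by move=> x y xI yI; rewrite !leNgt ltr_sin. Qed.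

Lemma ler_cos : {in `[0, pi] &, {mono (@cos R) : x y /~ x <= y}}.
Proof. by move=> x y xI yI; rewrite !leNgt ltr_cos. Qed.

Lemma ler_acos : {in `[-1, 1] &, {mono (@acos R) : x y /~ x <= y}}.
Proof.
move=> x y x1 y1; rewrite -[in RHS](acosK x1) -[in RHS](acosK y1).
by rewrite ler_cos// in_itv/= acos_ge0 ?acos_lepi//; move: x1 y1; rewrite !in_itv.
Qed.

Lemma sinBpi x : sin (pi - x) = sin x :> R.
Proof. by rewrite sinB sinpi cospi mul0r mulN1r opprK add0r. Qed.

Lemma cos1_mul_le_sin (m : R) : 0 <= m <= 1 -> cos 1 * m <= sin m.
Proof.
move=> /andP[m0 m1].
have [|c /[!in_itv] /= /andP[c0 cm]] :=
  @MVT_segment R sin cos 0 m m0 (fun x _ => is_derive_sin x).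
  exact/continuous_subspaceT/continuous_sin.
rewrite sin0 !subr0 => ->; apply: ler_wpM2r => //.
have pi1 : 1 <= pi :> R by apply: le_trans (pi_ge2 R); rewrite ler1n.
by rewrite ler_cos ?in_itv/= ?c0 ?ler01 ?pi1 ?(le_trans cm)// (le_trans m1).
Qed.

Lemma sin_le_itv (m t : R) : 0 <= m <= pi / 2 -> m <= t <= pi - m -> sin m <= sin t.
Proof.
move=> /andP[m0 mpi] /andP[mt tm].
have pi0 : 0 < pi :> R := pi_gt0 R.
have inI x : m <= x <= pi / 2 -> x \in `[- (pi / 2), pi / 2].
  by rewrite in_itv/= => /andP[mx ->]; rewrite andbT; lra.
have mI : m \in `[- (pi / 2), pi / 2] by rewrite inI ?lexx.
have [t_le|t_gt] := leP t (pi / 2); first by rewrite ler_sin// inI ?mt.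
have tI : pi - t \in `[- (pi / 2), pi / 2] by apply: inI; apply/andP; split; lra.
by rewrite -[sin t]sinBpi ler_sin//; lra.
Qed.

Lemma normr_Ik_le (k : nat) (t : R) : 0 <= t -> `|Ik k t| <= t.
Proof.
move=> t0; apply: (normr_Rintegral_le _ _ _ (fun=> 1)).
  by move=> s _; rewrite normrX exprn_ile1// sin_max.
by rewrite integral_cst//= lebesgue_measure_itvcc// mul1e subr0.
Qed.

End trigonometry.

Section sphere.
Context {R : realType} {n : nat}.
Local Notation V := 'rV[R]_(n.+1).
Implicit Types u v w a b c q x : V.

Lemma dotvC u v : dotv u v = dotv v u.
Proof. by apply: eq_bigr => i _; rewrite mulrC. Qed.

Lemma dotvDl u v w : dotv (u + v) w = dotv u w + dotv v w.
Proof. by rewrite /dotv -big_split; apply: eq_bigr => i _; rewrite mxE mulrDl. Qed.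

Lemma dotvZl (t : R) u w : dotv (t *: u) w = t * dotv u w.
Proof. by rewrite /dotv mulr_sumr; apply: eq_bigr => i _; rewrite mxE mulrA. Qed.

Lemma dotvNl u w : dotv (- u) w = - dotv u w.
Proof. by rewrite -scaleN1r dotvZl mulN1r. Qed.

Lemma dotvDr u v w : dotv w (u + v) = dotv w u + dotv w v.
Proof. by rewrite !(dotvC w) dotvDl. Qed.

Lemma dotvZr (t : R) u w : dotv w (t *: u) = t * dotv w u.
Proof. by rewrite !(dotvC w) dotvZl. Qed.

Lemma dotvNr u w : dotv w (- u) = - dotv w u.
Proof. by rewrite !(dotvC w) dotvNl. Qed.

Lemma sqr_coord_le_dotv v i : v 0 i ^+ 2 <= dotv v v.
Proof.
by rewrite /dotv (bigD1 i)//= expr2 lerDl sumr_ge0// => j _; rewrite -expr2 sqr_ge0.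
Qed.

Lemma dotvv_ge0 v : 0 <= dotv v v.
Proof. exact: le_trans (sqr_ge0 _) (sqr_coord_le_dotv v 0). Qed.

Lemma dotvv_eq0 v : (dotv v v == 0) = (v == 0).
Proof.
apply/idP/eqP => [|->]; last by rewrite /dotv big1// => i _; rewrite mxE mul0r.
rewrite /dotv psumr_eq0 => [/allP v0|i _]; last by rewrite -expr2 sqr_ge0.
apply/rowP => i; have /implyP := v0 i (mem_index_enum _).
by rewrite mxE mulf_eq0 orbb => /(_ isT)/eqP.
Qed.

Lemma dotv_sqr_le u v : dotv u v ^+ 2 <= dotv u u * dotv v v.
Proof.
set A := dotv u u; set C := dotv v v; set X := dotv u v.
have [v0|C0] := eqVneq v 0.
  by rewrite /X v0 -(scale0r 0) dotvZr mul0r expr0n mulr_ge0 ?dotvv_ge0.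
have {}C0 : 0 < C by rewrite lt_def dotvv_eq0 C0 dotvv_ge0.
have := dotvv_ge0 (C *: u - X *: v).
rewrite !(dotvDl, dotvDr, dotvNl, dotvNr, dotvZl, dotvZr) -/A -/C -/X (dotvC v u) -/X.
have -> : C * (C * A - X * X) + (C * - (X * X) - X * - (X * C)) =
  C * (A * C - X ^+ 2) by ring.
by rewrite pmulr_rge0// subr_ge0.
Qed.

Lemma dotv_sphere_itv a b : on_sphere a -> on_sphere b -> -1 <= dotv a b <= 1.
Proof.
rewrite /on_sphere => ha hb.
have := dotvv_ge0 (a - b); have := dotvv_ge0 (a + b).
rewrite !(dotvDl, dotvDr, dotvNl, dotvNr) ha hb (dotvC b a) => h1 h2.
by apply/andP; split; lra.
Qed.

Lemma gdistC a b : gdist a b = gdist b a.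
Proof. by rewrite /gdist dotvC. Qed.

Lemma gdist_itv a b : on_sphere a -> on_sphere b -> 0 <= gdist a b <= pi.
Proof. by move=> ha hb; rewrite acos_ge0 ?acos_lepi ?dotv_sphere_itv. Qed.

Lemma cos_gdist a b : on_sphere a -> on_sphere b -> cos (gdist a b) = dotv a b.
Proof. by move=> ha hb; rewrite acosK// in_itv/= dotv_sphere_itv. Qed.

Lemma gdistNl q x : on_sphere q -> on_sphere x -> gdist (- q) x = pi - gdist q x.
Proof. by move=> hq hx; rewrite /gdist dotvNl acosN// dotv_sphere_itv. Qed.

Lemma gdist_gt0 a b : on_sphere a -> on_sphere b -> a != b -> 0 < gdist a b.
Proof.
move=> ha hb ab; apply: acos_gt0.
have /andP[-> le1] := dotv_sphere_itv _ _ ha hb; rewrite lt_neqAle le1 andbT /=.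
apply: contra ab => /eqP ab1; rewrite -subr_eq0 -dotvv_eq0.
move: ha hb; rewrite /on_sphere => ha hb.
by rewrite !(dotvDl, dotvDr, dotvNl, dotvNr) ha hb (dotvC b a) ab1 !subrr addr0.
Qed.

Lemma cosD_gdist_le_dotv a b c : on_sphere a -> on_sphere b -> on_sphere c ->
  cos (gdist a b + gdist b c) <= dotv a c.
Proof.
rewrite /on_sphere => ha hb hc.
set P := dotv a b; set Q := dotv b c.
have hP := dotv_sphere_itv _ _ ha hb; have hQ := dotv_sphere_itv _ _ hb hc.
have dotv_proj x y t r : dotv x b = t -> dotv y b = r ->
    dotv (x - t *: b) (y - r *: b) = dotv x y - t * r.
  move=> xb yb; rewrite !(dotvDl, dotvDr, dotvNl, dotvNr, dotvZl, dotvZr).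
  by rewrite xb (dotvC b y) yb hb; ring.
have ab : dotv a b = P by []; have cb : dotv c b = Q by rewrite dotvC.
(* Cauchy-Schwarz for the components of a and c orthogonal to b. *)
have := dotv_sqr_le (a - P *: b) (c - Q *: b).
have sqr_le1 (t : R) : -1 <= t <= 1 -> t ^+ 2 <= 1 by move=> /andP[? ?]; nra.
rewrite !dotv_proj// ha hc -!expr2 -ler_sqrt ?mulr_ge0 ?subr_ge0 ?sqr_le1//.
rewrite sqrtr_sqr sqrtrM ?subr_ge0 ?sqr_le1// -!sin_acos// ler_norml => /andP[h _].
by rewrite /gdist cosD !acosK ?in_itv// -/P -/Q; lra.
Qed.

Lemma gdist_triangle a b c : on_sphere a -> on_sphere b -> on_sphere c ->
  gdist a c <= gdist a b + gdist b c.
Proof.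
move=> ha hb hc.
have /andP[ab0 abpi] := gdist_itv _ _ ha hb; have /andP[bc0 bcpi] := gdist_itv _ _ hb hc.
have [Dpi|Dpi] := leP (gdist a b + gdist b c) pi; last first.
  by have /andP[_ acpi] := gdist_itv _ _ ha hc; rewrite (le_trans acpi) ?ltW.
have D0 : 0 <= gdist a b + gdist b c by rewrite addr_ge0.
rewrite -[leRHS]cosK ?in_itv/= ?D0// /gdist ler_acos ?in_itv/= ?cos_geN1 ?cos_le1//.
  exact: cosD_gdist_le_dotv.
exact: dotv_sphere_itv.
Qed.

Lemma grad_dist_coord_le q x i : on_sphere q -> on_sphere x ->
  `|grad_dist q x 0 i| <= 1.
Proof.
move=> hq hx; set g := grad_dist q x.
have [s0|s0] := eqVneq (sin (gdist q x)) 0.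
  by rewrite /g /grad_dist s0 invr0 scale0r mxE normr0.
suff g1 : dotv g g = 1.
  rewrite -(ler_pXn2r (n := 2)) ?nnegrE// real_normK ?num_real// expr1n -g1.
  exact: sqr_coord_le_dotv.
move: hq hx; rewrite /on_sphere => hq hx.
rewrite /g /grad_dist !(dotvZl, dotvZr, dotvDl, dotvDr, dotvNl, dotvNr) hq hx.
rewrite (dotvC x q) -cos_gdist//.
have := sin2cos2 (gdist q x); set c := cos _; set s := sin _ => s2.
rewrite (_ : c * (c * 1 - c) - (c * c - 1) = s ^+ 2); last by rewrite s2; ring.
by field.
Qed.

Lemma Psi_coord_le k q x i : on_sphere q -> on_sphere x ->
  0 < gdist q x < pi -> `|Psi k q x 0 i| <= pi / sin (gdist q x) ^+ k.-1.
Proof.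
move=> hq hx /andP[D0 Dpi].
have sj : 0 < sin (gdist q x) ^+ k.-1 by rewrite exprn_gt0// sin_gt0_pi ?D0.
have hNq : on_sphere (- q) by rewrite /on_sphere dotvNl dotvNr opprK.
rewrite /Psi /Phi; case: eqP => _; first by rewrite mxE normr0 divr_ge0 ?ltW ?pi_gt0.
rewrite mxE normrM /phik gdistNl// subr_eq0 gt_eqF// sinBpi normrM.
have hI : `|Ik k (pi - gdist q x)| <= pi.
  by apply: le_trans (normr_Ik_le k _ _) _; lra.
rewrite [`|_^-1|]ger0_norm; last by rewrite invr_ge0 ltW.
rewrite mulrAC ler_pM2r ?invr_gt0//.
by rewrite -[leRHS]mulr1 ler_pM ?grad_dist_coord_le.
Qed.

Lemma Psi_coord_le_inv_pow k q x i (m : R) : on_sphere q -> on_sphere x ->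
  0 < m <= 1 -> m <= gdist q x <= pi - m ->
  `|Psi k q x 0 i| <= pi / (cos 1 * m) ^+ k.-1.
Proof.
move=> hq hx /andP[m0 m1] /andP[mD Dm].
have pi2 : 1 <= pi / 2 :> R by rewrite ler_pdivlMr// mul1r pi_ge2.
have cm0 : 0 < cos 1 * m by rewrite mulr_gt0 ?cos1_gt0.
have cm_le : cos 1 * m <= sin (gdist q x).
  apply: le_trans (cos1_mul_le_sin m _) _; first by rewrite ltW.
  by apply: sin_le_itv; rewrite ?mD ?Dm ?(ltW m0) ?(le_trans m1 pi2).
apply: le_trans (Psi_coord_le k q x i hq hx _) _.
  apply/andP; split; first exact: lt_le_trans mD.
  by apply: le_lt_trans Dm _; rewrite ltrBlDr ltrDl.
rewrite ler_pM2l ?pi_gt0// lef_pV2 ?posrE ?exprn_gt0 ?(lt_le_trans cm0)//.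
by rewrite lerXn2r ?nnegrE ?(ltW cm0) ?(ltW (lt_le_trans cm0 cm_le)).
Qed.

Lemma normv_le v (B : R) : 0 <= B -> (forall i, `|v 0 i| <= B) ->
  normv v <= n.+1%:R * B.
Proof.
move=> B0 vB; rewrite -[leRHS]ger0_norm ?mulr_ge0// -sqrtr_sqr ler_sqrt ?sqr_ge0//.
apply: (@le_trans _ _ (\sum_(i < n.+1) B ^+ 2)).
  by apply: ler_sum => i _; move: (vB i); rewrite ler_norml => /andP[? ?]; nra.
rewrite sumr_const card_ord exprMn -[B ^+ 2 *+ _]mulr_natl.
by rewrite ler_wpM2r ?sqr_ge0// expr2 ler_peMl// ler1n.
Qed.

End sphere.

Lemma littleo_inv_pow_of_split {R : realType} {T : Type} {P : T -> Prop}
    {dist F : T -> R} {j : nat} {c L : R} {C : R -> R} :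
  (0 < j)%N -> 0 < c -> 0 <= L -> (forall x, P x -> 0 < dist x) ->
  (forall eta x, 0 < eta <= c -> P x -> dist x <= c ->
     F x <= L * eta / dist x ^+ j + C eta) ->
  forall eps, 0 < eps -> exists delta, 0 < delta /\
    forall x, P x -> dist x < delta -> F x <= eps / dist x ^+ j.
Proof.
move=> j0 c0 L0 dist0 F_le eps eps0.
pose eta := Num.min c (eps / 2 / (L + 1)).
have eta0 : 0 < eta by rewrite lt_min c0 !divr_gt0// ltr_wpDl.
have L_eta : L * eta <= eps / 2.
  have -> : eps / 2 = (L + 1) * (eps / 2 / (L + 1)).
    by rewrite [RHS]mulrC divfK// gt_eqF// ltr_wpDl.
  by apply: ler_pM; rewrite ?(ltW eta0) ?lerDl ?ge_min ?lexx ?orbT.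
pose K := `|C eta| + 1.
have K0 : 0 < K by rewrite ltr_wpDl.
exists (Num.min (Num.min c 1) (eps / 2 / K)); split.
  by rewrite !lt_min c0 ltr01 !divr_gt0.
move=> x Px; rewrite !lt_min => /andP[/andP[dc d1] dK].
have d0 := dist0 x Px.
have dj0 : 0 < dist x ^+ j by rewrite exprn_gt0.
have dj_le : dist x ^+ j <= dist x.
  by rewrite -[leRHS]expr1 ler_wiXn2l// ?ltW.
have C_le : C eta * dist x ^+ j <= eps / 2.
  have Kd : K * dist x <= eps / 2 by rewrite mulrC -ler_pdivlMr// (ltW dK).
  apply: le_trans Kd; apply: le_trans (ler_norm _) _.
  by rewrite normrM (ger0_norm (ltW dj0)) ler_pM ?normr_ge0 ?(ltW dj0) ?lerDl.
apply: le_trans (F_le eta x _ Px (ltW dc)) _; first by rewrite eta0 ge_min lexx.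
by rewrite ler_pdivlMr// mulrDl divfK ?gt_eqF//; lra.
Qed.

Section PsiInt_estimate.
Variables (R : realType) (n k : nat) (p y : 'rV[R]_(n.+1)) (rho M : R).
Variables (gamma : R -> 'rV[R]_(n.+1)) (u : R -> R).
Hypotheses (hp : on_sphere p) (rho_gt0 : 0 < rho) (rho_lt : rho < pi / 2).
Hypothesis hy : on_sphere y.
Hypothesis gamma_sphere : forall s, rho <= s <= pi -> on_sphere (gamma s).
Hypothesis gamma_dist_p : forall s, rho <= s <= pi -> gdist p (gamma s) = s.
Hypothesis gamma_dist_y : forall s, rho <= s <= pi -> gdist (gamma s) y = s - rho.
Hypothesis u_le : forall s, rho <= s <= pi -> `|u s| <= M.

Lemma dist_gamma_bounds x s : on_sphere x -> gdist p x <= rho -> rho <= s <= pi ->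
  [/\ s - rho <= gdist (gamma s) x, gdist y x <= (s - rho) + gdist (gamma s) x
    & gdist (gamma s) x <= (s - rho) + gdist y x].
Proof.
move=> hx px hs; have hgs := gamma_sphere _ hs.
split.
- have := gdist_triangle _ _ _ hp hx hgs; rewrite gamma_dist_p// (gdistC x); lra.
- by have := gdist_triangle _ _ _ hy hgs hx; rewrite (gdistC y (gamma s)) gamma_dist_y.
- by have := gdist_triangle _ _ _ hgs hy hx; rewrite gamma_dist_y.
Qed.

Lemma normr_u_Psi_le x s i m : on_sphere x -> gdist p x <= rho -> rho <= s <= pi ->
  gdist y x <= rho / 2 -> 0 < m <= 1 -> m <= rho / 2 -> m <= gdist (gamma s) x ->
  `|u s * Psi k (gamma s) x 0 i| <= M * (pi / (cos 1 * m) ^+ k.-1).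
Proof.
move=> hx px hs yx m01 m_rho mD.
have [_ _ Dle] := dist_gamma_bounds _ _ hx px hs.
have Dm : gdist (gamma s) x <= pi - m by case/andP: hs => _ spi; lra.
rewrite normrM ler_pM ?normr_ge0 ?u_le//.
by apply: Psi_coord_le_inv_pow; rewrite ?mD ?Dm //; exact: gamma_sphere.
Qed.

Let rho_le_pi : rho <= pi.
Proof. by move: rho_lt (pi_gt0 R) => ? ?; lra. Qed.

Let M_ge0 : 0 <= M.
Proof. by apply: le_trans (u_le rho _); rewrite ?normr_ge0 ?lexx. Qed.

Lemma PsiInt_coord_le x i eta : on_sphere x -> gdist p x <= rho -> x != y ->
  0 < eta <= Num.min (rho / 2) 1 -> gdist y x <= Num.min (rho / 2) 1 ->
  `|PsiInt k rho pi u gamma x 0 i| <=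
    M * (pi / (cos 1 * (gdist y x / 2)) ^+ k.-1) * eta +
    M * (pi / (cos 1 * eta) ^+ k.-1) * (pi - rho).
Proof.
move=> hx px xy /andP[eta0]; rewrite !le_min => /andP[eta_rho eta1] /andP[d_rho d1].
have d0 : 0 < gdist y x by rewrite gdist_gt0// eq_sym.
have bound_ge0 m : 0 < m -> 0 <= M * (pi / (cos 1 * m) ^+ k.-1).
  move=> m0; have c1m : 0 <= cos 1 * m by rewrite mulr_ge0 ?(ltW m0) ?(ltW (cos1_gt0 R)).
  by rewrite mulr_ge0 ?divr_ge0 ?exprn_ge0 ?pi_ge0.
set A := M * _; set B := M * _.
(* Near y only D(s) >= d/2 is available; beyond rho + eta, D(s) >= s - rho >= eta. *)
rewrite mxE; apply: (normr_Rintegral_le lebesgue_measure _ _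
  (fun s => A * \1_`[rho, rho + eta] s + B)).
  move=> s /=; rewrite in_itv/= => hs.
  have [D_ge D_ge' _] := dist_gamma_bounds _ _ hx px hs.
  have [se|se] := leP s (rho + eta).
    rewrite indicE mem_set ?mulr1; last by rewrite /= in_itv/= (andP hs).1 se.
    have m01 : 0 < gdist y x / 2 <= 1 by apply/andP; split; lra.
    apply: le_trans (normr_u_Psi_le _ _ i _ hx px hs d_rho m01 _ _) _; try lra.
    by rewrite lerDl; exact: bound_ge0.
  rewrite indicE memNset ?mulr0 ?add0r; last by rewrite /= in_itv/= (leNgt s) se andbF.
  by apply: normr_u_Psi_le; rewrite ?eta0 //; lra.
by apply: integral_itv_step_le; rewrite ?bound_ge0 ?divr_gt0 ?(ltW eta0).
Qed.

Lemma normv_PsiInt_split : exists c L (C : R -> R), [/\ 0 < c, 0 <= L &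
  forall eta x, 0 < eta <= c -> [/\ on_sphere x, gdist p x <= rho & x != y] ->
    gdist y x <= c ->
    normv (PsiInt k rho pi u gamma x) <= L * eta / gdist y x ^+ k.-1 + C eta].
Proof.
have c1 : cos 1 != 0 :> R by rewrite gt_eqF ?cos1_gt0.
exists (Num.min (rho / 2) 1), (n.+1%:R * (M * pi * (2 / cos 1) ^+ k.-1)).
exists (fun eta => n.+1%:R * (M * (pi / (cos 1 * eta) ^+ k.-1) * (pi - rho))).
split; first by rewrite lt_min ltr01 divr_gt0.
  by rewrite !mulr_ge0 ?pi_ge0 ?exprn_ge0 ?divr_ge0 ?(ltW (cos1_gt0 R)).
move=> eta x eta_c [hx px xy] d_c.
have d0 : gdist y x != 0 by rewrite gt_eqF// gdist_gt0// eq_sym.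
have coord_le i := PsiInt_coord_le _ i _ hx px xy eta_c d_c.
apply: le_trans (normv_le _ _ (le_trans (normr_ge0 _) (coord_le 0)) coord_le) _.
rewrite mulrDr lerD// le_eqVlt; apply/orP; left; apply/eqP.
by rewrite !exprMn !exprVn; field; rewrite !expf_neq0.
Qed.

End PsiInt_estimate.

Theorem lemma2p12 (R : realType) (n k : nat) (p y : 'rV[R]_(n.+1)) (rho : R)
  (gamma : R -> 'rV[R]_(n.+1)) (u : R -> R) :
  (2 <= k)%N ->
  on_sphere p -> 0 < rho -> rho < pi / 2 ->
  on_sphere y -> gdist p y = rho ->
  (* gamma : [rho, pi] -> S^n unit-speed minimizing geodesic from y to -p
     with d_p(gamma s) = s *)
  gamma rho = y -> gamma pi = - p ->
  (forall s, rho <= s <= pi -> on_sphere (gamma s)) ->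
  (forall s, rho <= s <= pi -> gdist p (gamma s) = s) ->
  (forall s t, rho <= s <= pi -> rho <= t <= pi ->
     gdist (gamma s) (gamma t) = `|s - t|) ->
  (* u bounded and integrable on [rho, pi] *)
  (exists M : R, forall s, rho <= s <= pi -> `|u s| <= M) ->
  lebesgue_measure.-integrable `[rho, pi] (EFin \o u) ->
  (* o(d_y^{1-k}) as d_y -> 0 on B_rho \ {y} *)
  forall eps : R, 0 < eps -> exists delta : R, 0 < delta /\
    forall x : 'rV[R]_(n.+1), on_sphere x -> gdist p x <= rho -> x != y ->
      gdist y x < delta ->
      normv (PsiInt k rho pi u gamma x) <= eps * (gdist y x ^+ (k.-1))^-1.
Proof.
move=> k2 hp rho0 rho_lt hy _ g_rho _ g_sph g_p g_iso [M u_le] _ eps eps0.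
have j0 : (0 < k.-1)%N by case: k k2 => [|[]].
have g_y s : rho <= s <= pi -> gdist (gamma s) y = s - rho.
  move=> /andP[rs spi]; have pi0 := pi_gt0 R.
  by rewrite -g_rho g_iso ?rs ?spi ?lexx ?ger0_norm ?subr_ge0//=; lra.
have [c [L [C [c0 L0 split_le]]]] :=
  @normv_PsiInt_split R n k p y rho M gamma u hp rho0 rho_lt hy g_sph g_p g_y u_le.
have dist0 x : [/\ on_sphere x, gdist p x <= rho & x != y] -> 0 < gdist y x.
  by case=> hx _ xy; rewrite gdist_gt0// eq_sym.
have [delta [delta0 small]] := littleo_inv_pow_of_split j0 c0 L0 dist0 split_le _ eps0.
by exists delta; split=> // x hx px xy; apply: small.
Qed.
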